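(* Let $(M,d)$ be a compact metric space, $\mu$ a probability measure on $M$, $k:M\times M\to[0,1]$ a measurable kernel, $M^s\subseteq M$ a measurable set, and $\rho>0$. Then there exists a unique measurable map $v^*:M\to[0,1]$ such that $v^*(x)=1$ for all $x\in M^s$ and, for all $x\in M\setminus M^s$, $$v^*(x)=\frac{\int_{M^s}k(x,y)\,d\mu(y)+\int_{M\setminus M^s}v^*(y)k(x,y)\,d\mu(y)}{\rho+\int_M k(x,y)\,d\mu(y)}.$$ *)

From HB Require Import structures.
From mathcomp Require Import all_boot all_order all_algebra.
From mathcomp Require Import all_classical all_reals all_analysis.
Set Implicit Arguments. Unset Strict Implicit. Unset Printing Implicit Defensive.
Import Order.TTheory GRing.Theory Num.Theory.

Notation borelT T := (g_sigma_algebraType (@open T)) (only parsing).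

From HB Require Import structures.
From mathcomp Require Import all_boot all_order all_algebra.
From mathcomp Require Import all_classical all_reals all_analysis.
From mathcomp Require Import measurable_realfun lra.
Set Implicit Arguments. Unset Strict Implicit. Unset Printing Implicit Defensive.
Import Order.TTheory GRing.Theory Num.Theory.
Import numFieldNormedType.Exports.
Local Open Scope classical_set_scope.
Local Open Scope ring_scope.

(* Let Phi be the right-hand side of the equation, extended by 1 on Ms.  As the
   kernel mass K x = \int k (x, y) dmu(y) is at most 1, Phi contracts the sup-distance
   of [0, 1]-valued functions by the factor K / (rho + K) <= 1 / (1 + rho), whence
   uniqueness.  Phi is also monotone, so its iterates from 0 increase to a measurable
   limit, which is a fixed point by dominated convergence under the integral.  Neither
   the metric nor the compactness of M plays a role: the argument works on any
   measurable space carrying a probability measure. *)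

Lemma sup_contraction_eq0 (R : realType) (T : Type) (f : T -> R) (B c : R) :
  c < 1 -> (forall x, `|f x| <= B) ->
  (forall s, (forall y, `|f y| <= s) -> forall x, `|f x| <= c * s) ->
  forall x, f x = 0.
Proof.
move=> c_lt1 f_bd f_contr x0.
pose E := range (fun y => `|f y|).
have E_ub : has_ubound E by exists B => _ [y _ <-]; exact: f_bd.
have f_le_supE y : `|f y| <= sup E by apply: (ub_le_sup E_ub); exists y.
have supE_ge0 : 0 <= sup E := le_trans (normr_ge0 _) (f_le_supE x0).
have supE_le : sup E <= c * sup E.
  by apply: ge_sup; [exists `|f x0|, x0 | move=> _ [y _ <-]; exact: f_contr].
have supE_le0 : sup E <= 0.
  by move: supE_le; rewrite -subr_le0 -{1}[sup E]mul1r -mulrBl pmulr_rle0 ?subr_gt0.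
by apply/eqP; rewrite -normr_le0; exact: le_trans (f_le_supE x0) supE_le0.
Qed.

Lemma integrable_bounded (R : realType) (d : measure_display) (T : measurableType d)
  (mu : {finite_measure set T -> \bar R}) (D : set T) (f : T -> R) (c : R) :
  measurable D -> measurable_fun [set: T] f -> (forall y, `|f y| <= c) ->
  mu.-integrable D (EFin \o f).
Proof.
move=> mD mf f_bd.
apply: (le_integrable mD _ _ (finite_measure_integrable_cst mu c mD)).
  exact/measurable_EFinP/(measurable_funS measurableT).
by move=> y _ /=; rewrite lee_fin (le_trans (f_bd y)) ?ler_norm.
Qed.

Lemma measurable_mem (d : measure_display) (T : measurableType d) (A : set T) :
  measurable A -> measurable_fun [set: T] (fun x => x \in A).
Proof.
move=> mA; apply: (measurable_fun_bool true); rewrite setTI.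
suff -> : (fun x => x \in A) @^-1` [set true] = A by [].
by apply/seteqP; split=> x /=; [move/set_mem | move/mem_set].
Qed.

Lemma measurable_funV (R : realType) (d : measure_display) (T : measurableType d)
  (f : T -> R) : measurable_fun [set: T] f -> (forall x, 0 < f x) ->
  measurable_fun [set: T] (fun x => (f x)^-1).
Proof.
move=> mf f_gt0; apply: (measurable_comp (F := `]0, +oo[%classic : set R)) mf.
- exact: measurable_itv.
- by move=> _ [x _ <-]; rewrite /= in_itv /= andbT f_gt0.
- apply: open_continuous_measurable_fun; first exact: interval_open.
  move=> t; rewrite inE /= in_itv /= andbT => t_gt0.
  by apply: inv_continuous; rewrite gt_eqF.
Qed.

Section kernel_fixed_point.
Variables (R : realType) (d : measure_display) (T : measurableType d).
Variables (mu : probability T R) (k : T * T -> R).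
Hypothesis mk : measurable_fun [set: T * T] k.
Hypothesis k01 : forall z, 0 <= k z <= 1.
Implicit Types (D : set T) (v w : T -> R) (x : T).

Definition mfun01 (v : T -> R) :=
  measurable_fun [set: T] v /\ forall y, 0 <= v y <= 1.

Definition kint (D : set T) (v : T -> R) x := Rintegral mu D (fun y => v y * k (x, y)).
Definition kmass (D : set T) x := Rintegral mu D (fun y => k (x, y)).

Let k_ge0 z : 0 <= k z. Proof. by case/andP: (k01 z). Qed.
Let k_le1 z : k z <= 1. Proof. by case/andP: (k01 z). Qed.

Let measurable_k_section x : measurable_fun [set: T] (fun y => k (x, y)).
Proof. exact: measurable_fun_pair2. Qed.

Lemma mfun01_cst (a : R) : 0 <= a <= 1 -> mfun01 (cst a).
Proof. by split=> //; exact: measurable_cst. Qed.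

Lemma kmassE D x : kmass D x = kint D (cst 1) x.
Proof. by apply: eq_Rintegral => y _; rewrite mul1r. Qed.

Lemma integrable_kint D v x : measurable D -> mfun01 v ->
  mu.-integrable D (EFin \o (fun y => v y * k (x, y))).
Proof.
move=> mD [mv v01]; apply: (integrable_bounded mu (c := 1)) => // [|y].
  exact: measurable_funM.
have /andP[v0 v1] := v01 y.
by rewrite normrM !ger0_norm ?mulr_ile1 ?k_ge0 ?k_le1.
Qed.

Lemma integrable_kmass D x : measurable D -> mu.-integrable D (EFin \o (fun y => k (x, y))).
Proof.
by move=> mD; apply: (integrable_bounded mu (c := 1)) => // y; rewrite ger0_norm ?k_ge0.
Qed.

Lemma measurable_kint D v : measurable D ->
  measurable_fun [set: T] v -> (forall y, 0 <= v y) -> measurable_fun [set: T] (kint D v).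
Proof.
move=> mD mv v_ge0.
pose F (z : T * T) := (\1_D z.2 * v z.2 * k z)%:E.
have mF : measurable_fun [set: T * T] F.
  apply/measurable_EFinP; apply: measurable_funM => //.
  by apply: measurable_funM; apply: measurableT_comp => //; exact: measurable_indic.
have F_ge0 z : (0 <= F z)%E by rewrite lee_fin !mulr_ge0.
have := measurable_fun_fubini_tonelli_F (m2 := mu) F mF F_ge0.
move/(measurableT_comp (fine_measurable measurableT)).
apply: eq_measurable_fun => x _ /=; congr fine; rewrite integral_mkcond.
apply: eq_integral => y _; rewrite /F /= patchE indicE.
by case: ifPn => _; rewrite ?mul1r ?mul0r.
Qed.

Lemma measurable_kmass D : measurable D -> measurable_fun [set: T] (kmass D).
Proof.
move=> mD; rewrite (funext (kmassE D)).
exact: measurable_kint (measurable_cst _) (fun=> ler01).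
Qed.

Lemma kint_ge0 D v x : (forall y, 0 <= v y) -> 0 <= kint D v x.
Proof. by move=> v_ge0; apply: Rintegral_ge0 => y _; rewrite mulr_ge0. Qed.

Lemma kmass_ge0 D x : 0 <= kmass D x.
Proof. by rewrite kmassE kint_ge0. Qed.

Lemma le_kint D v w x : measurable D -> mfun01 v -> mfun01 w ->
  (forall y, v y <= w y) -> kint D v x <= kint D w x.
Proof.
move=> mD v01 w01 vw; apply: le_Rintegral; rewrite ?integrable_kint //.
by move=> y _; rewrite ler_wpM2r.
Qed.

Lemma kint_le_kmass D v x : measurable D -> mfun01 v -> kint D v x <= kmass D x.
Proof.
move=> mD v01; rewrite kmassE; apply: le_kint => //.
  by apply: mfun01_cst; rewrite ler01 lexx.
by move=> y; case/andP: (v01.2 y).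
Qed.

Lemma kmass_setC D x : measurable D -> kmass [set: T] x = kmass D x + kmass (~` D) x.
Proof.
move=> mD; rewrite /kmass -(setUv D) Rintegral_setU ?setUv ?integrable_kmass //.
  exact: measurableC.
by rewrite /disj_set setICr.
Qed.

Lemma kmassT_le1 x : kmass [set: T] x <= 1.
Proof.
apply: (@le_trans _ _ (Rintegral mu [set: T] (fun=> 1))).
  by apply: le_Rintegral; rewrite ?integrable_kmass ?finite_measure_integrable_cst.
by rewrite Rintegral_cst // mul1r; move: (probability_setT mu) => /= ->.
Qed.

Lemma kint_lipschitz D v w x s : measurable D -> mfun01 v -> mfun01 w ->
  (forall y, `|v y - w y| <= s) -> `|kint D v x - kint D w x| <= s * kmass D x.
Proof.
move=> mD v01 w01 vw_s.
have s_ge0 : 0 <= s := le_trans (normr_ge0 _) (vw_s x).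
have diff_le y : `|v y * k (x, y) - w y * k (x, y)| <= s * k (x, y).
  by rewrite -mulrBl normrM (ger0_norm (k_ge0 _)) ler_wpM2r.
have diff_int : mu.-integrable D (EFin \o (fun y => v y * k (x, y) - w y * k (x, y))).
  apply: (integrable_bounded mu (c := s)) => // [|y].
    by apply: measurable_funB; apply: measurable_funM; [exact: v01.1 | | exact: w01.1 |].
  by rewrite (le_trans (diff_le y)) ?ler_piMr.
rewrite /kint -RintegralB ?integrable_kint //.
apply: le_trans (le_normr_Rintegral mD diff_int) _.
rewrite /kmass -RintegralZl ?integrable_kmass //.
apply: le_Rintegral => //; first exact: integrable_norm.
apply: (integrable_bounded mu (c := s)) => // [|y]; first exact: measurable_funM.
by rewrite normrM (ger0_norm s_ge0) (ger0_norm (k_ge0 _)) ler_piMr.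
Qed.

Lemma cvg_kint D (v_ : nat -> T -> R) v x : measurable D ->
  (forall n, mfun01 (v_ n)) -> mfun01 v -> (forall y, v_ n y @[n --> \oo] --> v y) ->
  kint D (v_ n) x @[n --> \oo] --> kint D v x.
Proof.
move=> mD vn01 v01 vn_v.
have mvnk n : measurable_fun D (fun y => (v_ n y * k (x, y))%:E).
  apply/measurable_EFinP/(measurable_funS measurableT) => //.
  exact: measurable_funM (vn01 n).1 _.
have mvk : measurable_fun D (fun y => (v y * k (x, y))%:E).
  apply/measurable_EFinP/(measurable_funS measurableT) => //.
  exact: measurable_funM v01.1 _.
have vnk_vk : {ae mu, forall y, D y ->
    (fun n => (v_ n y * k (x, y))%:E) @ \oo --> (v y * k (x, y))%:E}.
  by apply: aeW => y _; apply: cvg_EFin; [exact: nearW | exact: cvgM (vn_v y) (cvg_cst _)].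
have vnk_le1 : {ae mu, forall y n, D y ->
    (`|(v_ n y * k (x, y))%:E| <= (EFin \o cst (1%R : R)) y)%E}.
  apply: aeW => y n _; have /andP[vn_ge0 vn_le1] := (vn01 n).2 y.
  by rewrite /= lee_fin normrM !ger0_norm ?mulr_ile1.
have [_ _] := dominated_convergence mD mvnk mvk vnk_vk
  (finite_measure_integrable_cst mu 1 mD) vnk_le1.
rewrite -(fineK (integrable_fin_num mD (integrable_kint x mD v01))).
exact: fine_cvg.
Qed.

Variables (Ms : set T) (rho : R).
Hypothesis mMs : measurable Ms.
Hypothesis rho_gt0 : 0 < rho.

Definition Phi v x :=
  if x \in Ms then 1 else (kmass Ms x + kint (~` Ms) v x) / (rho + kmass [set: T] x).

Let mMsC : measurable (~` Ms). Proof. exact: measurableC. Qed.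

Let den_gt0 x : 0 < rho + kmass [set: T] x.
Proof. by rewrite ltr_wpDr ?kmass_ge0. Qed.

Lemma Phi_in v x : Ms x -> Phi v x = 1.
Proof. by move=> Msx; rewrite /Phi mem_set. Qed.

Lemma Phi_out v x : ~ Ms x ->
  Phi v x = (kmass Ms x + kint (~` Ms) v x) / (rho + kmass [set: T] x).
Proof. by move=> Msx; rewrite /Phi memNset. Qed.

Lemma Phi_fixpointP v : Phi v = v <->
  (forall x, Ms x -> v x = 1) /\
  (forall x, ~ Ms x -> v x = (kmass Ms x + kint (~` Ms) v x) / (rho + kmass [set: T] x)).
Proof.
split=> [Phiv | [v1 v_rec]].
  by split=> x Msx; rewrite -{1}Phiv; [rewrite Phi_in | rewrite Phi_out].
apply/funext => x; have [Msx|Msx] := pselect (Ms x).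
  by rewrite Phi_in ?v1.
by rewrite Phi_out ?v_rec.
Qed.

Lemma Phi_mfun01 v : mfun01 v -> mfun01 (Phi v).
Proof.
move=> v01; split.
  apply: measurable_fun_ifT; [exact: measurable_mem | exact: measurable_cst |].
  apply: measurable_funM; last first.
    by apply: measurable_funV den_gt0; apply: measurable_funD => //; exact: measurable_kmass.
  apply: measurable_funD; first exact: measurable_kmass.
  by apply: measurable_kint v01.1 _ => // y; case/andP: (v01.2 y).
move=> x; have [Msx|Msx] := pselect (Ms x); first by rewrite Phi_in // ler01 lexx.
have num_le : kmass Ms x + kint (~` Ms) v x <= rho + kmass [set: T] x.
  rewrite (kmass_setC x mMs); apply: ler_wpDl; first exact: ltW.
  by rewrite lerD2l kint_le_kmass.
rewrite Phi_out // ler_pdivrMr // mul1r num_le andbT.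
rewrite divr_ge0 ?(ltW (den_gt0 x)) ?addr_ge0 ?kmass_ge0 //.
by apply: kint_ge0 => y; case/andP: (v01.2 y).
Qed.

Lemma le_Phi v w x : mfun01 v -> mfun01 w -> (forall y, v y <= w y) -> Phi v x <= Phi w x.
Proof.
move=> v01 w01 vw; have [Msx|Msx] := pselect (Ms x); first by rewrite !Phi_in.
rewrite !Phi_out // ler_wpM2r ?invr_ge0 ?(ltW (den_gt0 x)) //.
by rewrite lerD2l le_kint.
Qed.

Lemma Phi_contraction v w s : mfun01 v -> mfun01 w ->
  (forall y, `|v y - w y| <= s) -> forall x, `|Phi v x - Phi w x| <= (1 + rho)^-1 * s.
Proof.
move=> v01 w01 vw_s x.
have s_ge0 : 0 <= s := le_trans (normr_ge0 _) (vw_s x).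
have opr_gt0 : 0 < 1 + rho by rewrite addr_gt0 ?ltr01.
set c := (1 + rho)^-1.
have c_gt0 : 0 < c by rewrite invr_gt0.
have c_def : c * (1 + rho) = 1 by rewrite mulVf ?gt_eqF.
have [Msx|Msx] := pselect (Ms x).
  by rewrite !Phi_in // subrr normr0 mulr_ge0 // ltW.
set K := kmass [set: T] x.
have K_le1 : K <= 1 := kmassT_le1 x.
have MsC_le_K : kmass (~` Ms) x <= K by rewrite /K (kmass_setC x mMs) lerDr kmass_ge0.
rewrite !Phi_out // -mulrBl opprD addrACA subrr add0r normrM normfV.
rewrite (gtr0_norm (den_gt0 x)) ler_pdivrMr //.
apply: le_trans (kint_lipschitz x mMsC v01 w01 vw_s) _.
apply: le_trans (_ : s * K <= _); first by rewrite ler_wpM2l.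
rewrite -mulrA mulrCA ler_wpM2l // -/K.
(* c * rho = 1 - c, so c * (rho + K) - K = (1 - c) * (1 - K). *)
have c_le1 : c <= 1 by have := mulr_gt0 c_gt0 rho_gt0; lra.
have : 0 <= (1 - c) * (1 - K) by rewrite mulr_ge0 ?subr_ge0.
lra.
Qed.

Lemma Phi_fixpoint_unique v w : mfun01 v -> mfun01 w -> Phi v = v -> Phi w = w -> v = w.
Proof.
move=> v01 w01 Phiv Phiw; apply/funext => x; apply/eqP; rewrite -subr_eq0; apply/eqP.
apply: (@sup_contraction_eq0 _ _ (fun y => v y - w y) 1 (1 + rho)^-1).
- by rewrite invf_lt1 ?addr_gt0 ?ltr01 // ltrDl.
- move=> y; have /andP[v_ge0 v_le1] := v01.2 y; have /andP[w_ge0 w_le1] := w01.2 y.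
  by rewrite ler_norml; apply/andP; split; lra.
- by move=> s vw_s y; rewrite -Phiv -Phiw; exact: Phi_contraction.
Qed.

Let Phi_iter n := iter n Phi (cst 0).

Lemma Phi_iter_mfun01 n : mfun01 (Phi_iter n).
Proof.
elim: n => [|n IHn]; last exact: Phi_mfun01.
by apply: mfun01_cst; rewrite lexx ler01.
Qed.

Lemma Phi_iter_nondecreasing x : nondecreasing_seq (Phi_iter ^~ x).
Proof.
apply/nondecreasing_seqP => n; elim: n x => [|n IHn] x.
  by case/andP: ((Phi_iter_mfun01 1).2 x).
exact: le_Phi (Phi_iter_mfun01 _) (Phi_iter_mfun01 _) IHn.
Qed.

Definition Phi_lim x := sup (range (Phi_iter ^~ x)).

Let Phi_iter_ub x : has_ubound (range (Phi_iter ^~ x)).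
Proof. by exists 1 => _ [n _ <-]; case/andP: ((Phi_iter_mfun01 n).2 x). Qed.

Lemma cvg_Phi_iter x : Phi_iter n x @[n --> \oo] --> Phi_lim x.
Proof. exact: nondecreasing_cvgn (Phi_iter_nondecreasing x) (Phi_iter_ub x). Qed.

Lemma Phi_iter_le_lim n x : Phi_iter n x <= Phi_lim x.
Proof. by apply: (ub_le_sup (Phi_iter_ub x)); exists n. Qed.

Lemma Phi_lim_mfun01 : mfun01 Phi_lim.
Proof.
split.
  apply: (measurable_fun_cvg (h := Phi_iter)) => [n|x _]; last exact: cvg_Phi_iter.
  exact: (Phi_iter_mfun01 n).1.
move=> x; rewrite (le_trans _ (Phi_iter_le_lim 0 x)) //=.
apply: ge_sup => [|_ [n _ <-]]; first by exists (Phi_iter 0 x), 0%N.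
by case/andP: ((Phi_iter_mfun01 n).2 x).
Qed.

Lemma Phi_lim_fixpoint : Phi Phi_lim = Phi_lim.
Proof.
apply/funext => x; have [Msx|Msx] := pselect (Ms x).
  rewrite Phi_in //; apply/le_anti/andP; split; last by case/andP: (Phi_lim_mfun01.2 x).
  by rewrite (le_trans _ (Phi_iter_le_lim 1 x)) //= Phi_in.
have lim_shift : Phi_iter n.+1 x @[n --> \oo] --> Phi_lim x.
  by move: (@cvg_Phi_iter x); rewrite -cvg_shiftS.
have lim_Phi : Phi_iter n.+1 x @[n --> \oo] --> Phi Phi_lim x.
  rewrite Phi_out //; under eq_fun do rewrite /= Phi_out //.
  apply: cvgM (cvg_cst _); apply: cvgD (cvg_cst _) _.
  by apply: cvg_kint Phi_iter_mfun01 Phi_lim_mfun01 _ => //; exact: cvg_Phi_iter.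
exact: esym (cvg_unique _ lim_shift lim_Phi).
Qed.

Lemma Phi_unique_fixpoint : exists! v, mfun01 v /\ Phi v = v.
Proof.
exists Phi_lim; split=> [|w [w01 Phiw]]; first exact: (conj Phi_lim_mfun01 Phi_lim_fixpoint).
exact: Phi_fixpoint_unique Phi_lim_mfun01 w01 Phi_lim_fixpoint Phiw.
Qed.

End kernel_fixed_point.

Theorem theorem1 (R : realType) (M : pseudoPMetricType R)
  (M_hausdorff : hausdorff_space M) (M_compact : compact [set: M])
  (mu : probability (borelT M) R)
  (k : borelT M * borelT M -> R) (mk : measurable_fun [set: borelT M * borelT M] k)
  (k01 : forall z, 0 <= k z <= 1)
  (Ms : set (borelT M)) (mMs : measurable Ms)
  (rho : R) (rho_gt0 : 0 < rho) :
  exists! v : borelT M -> R,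
    [/\ measurable_fun [set: borelT M] v,
        (forall x, 0 <= v x <= 1),
        (forall x, Ms x -> v x = 1) &
        (forall x, ~ Ms x ->
           v x = (Rintegral mu Ms (fun y => k (x, y))
                  + Rintegral mu (~` Ms) (fun y => v y * k (x, y)))
                 / (rho + Rintegral mu [set: borelT M] (fun y => k (x, y))))].
Proof.
have [v [[[mv v01] Phiv] v_uniq]] := Phi_unique_fixpoint mu mk k01 mMs rho_gt0.
have [v1 v_rec] := (Phi_fixpointP mu k Ms rho v).1 Phiv.
exists v; split=> [|w [mw w01 w1 w_rec]]; first by split.
by apply: v_uniq; split; [split | apply/Phi_fixpointP].
Qed.
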